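(* Let $G=(V,E)$ be a tree on a non-empty finite vertex set $V$, and let $\{A_v\}_{v\in V}$ be events in a probability space. Then \[ \Pr\Big(\bigcup_{v\in V} A_v\Big) \;\ge\; \frac{1}{\alpha(G)}\Big(\sum_{v\in V}\Pr(A_v) - \sum_{\{v,w\}\in E}\Pr(A_v\cap A_w)\Big). \]
   Context: $\alpha(G)$ denotes the independence number of $G$ (maximum size of a set of pairwise non-adjacent vertices). *)

From mathcomp Require Import all_boot.
From Stdlib Require Import Reals.
Set Implicit Arguments.
Unset Strict Implicit.
Unset Printing Implicit Defensive.

Definition simple_graph (T : finType) (e : rel T) : Prop :=
  symmetric e /\ irreflexive e.

Definition has_cycle (T : finType) (e : rel T) : Prop :=
  exists c : seq T, [/\ 3 <= size c, uniq c & cycle e c].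

Definition is_tree (T : finType) (e : rel T) : Prop :=
  [/\ simple_graph e, (forall x y : T, connect e x y) & ~ has_cycle e].

Definition independent (T : finType) (e : rel T) (S : {set T}) : bool :=
  [forall x in S, forall y in S, ~~ e x y].

Definition alpha (T : finType) (e : rel T) : nat :=
  \max_(S : {set T} | independent e S) #|S|.

Definition edges (T : finType) (e : rel T) : {set {set T}} :=
  [set [set x.1; x.2] | x in [set x : T * T | e x.1 x.2]].

Record prob_space (Omega : Type) := ProbSpace {
  measurable : (Omega -> Prop) -> Prop;
  Pr : (Omega -> Prop) -> R;
  measurable_full : measurable (fun _ => True);
  measurable_compl : forall A, measurable A -> measurable (fun w => ~ A w);
  measurable_cunion : forall F : nat -> Omega -> Prop,
      (forall n, measurable (F n)) -> measurable (fun w => exists n, F n w);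
  Pr_nonneg : forall A, measurable A -> (0 <= Pr A)%R;
  Pr_full : Pr (fun _ => True) = 1%R;
  Pr_sigma_additive : forall F : nat -> Omega -> Prop,
      (forall n, measurable (F n)) ->
      (forall m n, m <> n -> forall w, F m w -> F n w -> False) ->
      infinite_sum (fun n => Pr (F n)) (Pr (fun w => exists n, F n w))
}.

From mathcomp Require Import all_boot all_order all_algebra boolp Rstruct.
From Stdlib Require Import Reals Lra.
Set Implicit Arguments.
Unset Strict Implicit.
Unset Printing Implicit Defensive.
Import GRing.Theory Num.Theory.

(* Partition the sample space into the atoms [atom S] on which exactly the
   events [A v], [v \in S], occur.  The three probabilities in the statement
   are sums of atom probabilities weighted by #|S|, by the number of edges
   inside S, and by [S != set0] respectively, so it suffices that
   #|S| <= alpha + #(edges inside S) for every vertex set S.  Root the tree and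
   let p be its parent map: the vertices v of S with p v in S inject into the
   edges inside S via v |-> {v, p v}, and the other vertices of S form an
   independent set, because every edge of a tree joins a vertex to its
   parent. *)

Section FiniteAdditivity.
Variables (Omega : Type) (P : prob_space Omega).
Implicit Types X Y : Omega -> Prop.

Lemma eq_event X Y : (forall w, X w <-> Y w) -> X = Y.
Proof. by move=> XY; apply: funext => w; apply: propext. Qed.

Lemma Pr_ext X Y : (forall w, X w <-> Y w) -> Pr P X = Pr P Y.
Proof. by move/eq_event->. Qed.

Lemma measurable_ext X Y :
  (forall w, X w <-> Y w) -> measurable P Y -> measurable P X.
Proof. by move/eq_event->. Qed.

Lemma measurable0 : measurable P (fun _ => False).
Proof.
apply: (@measurable_ext _ (fun w => ~ True)) => //.
exact/measurable_compl/measurable_full.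
Qed.

Lemma measurableU X Y :
  measurable P X -> measurable P Y -> measurable P (fun w => X w \/ Y w).
Proof.
move=> mX mY; pose F n := if n is 0 then X else Y.
apply: (@measurable_ext _ (fun w => exists n, F n w)).
  by move=> w; split=> [[Xw|Yw]|[[|n] Fw]]; [exists 0 | exists 1 | left | right].
by apply: measurable_cunion => -[].
Qed.

Lemma measurableI X Y :
  measurable P X -> measurable P Y -> measurable P (fun w => X w /\ Y w).
Proof.
move=> mX mY; apply: (@measurable_ext _ (fun w => ~ (~ X w \/ ~ Y w))).
  by move=> w; split=> [[Xw Yw] []|/not_orP[/contrapT Xw /contrapT]].
by apply/measurable_compl/measurableU; apply: measurable_compl.
Qed.

Lemma measurable_big_inter (I : eqType) (C : I -> Omega -> Prop) (s : seq I) :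
  (forall i, measurable P (C i)) -> measurable P (fun w => forall i, i \in s -> C i w).
Proof.
move=> mC; elim: s => [|i s IHs].
  by apply: (@measurable_ext _ (fun _ => True)) => //; apply: measurable_full.
apply: (@measurable_ext _ (fun w => C i w /\ forall j, j \in s -> C j w)); last first.
  exact: measurableI.
move=> w; split=> [Cw|[Ciw Csw] j]; last by rewrite inE => /predU1P[->|/Csw].
by split=> [|j js]; apply: Cw; rewrite inE ?eqxx ?js ?orbT.
Qed.

Lemma infinite_sum_eventually (u : nat -> R) (N : nat) (l : R) :
  (forall n, N <= n -> sum_f_R0 u n = l) -> infinite_sum u l.
Proof.
move=> ul eps eps_gt0; exists N => n /leP /ul ->.
by rewrite /R_dist Rminus_diag Rabs_R0.
Qed.

(* A constant series can only sum to its constant term if that term is 0. *)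
Lemma Pr0 : Pr P (fun _ => False) = 0%R.
Proof.
have := Pr_sigma_additive (fun _ => measurable0) (fun _ _ _ _ f _ => f).
rewrite (@eq_event (fun w => exists _ : nat, False) (fun _ => False)); last first.
  by move=> w; split=> [[]|].
set c := Pr P _ => csum.
case: (Req_dec c 0) => // /Rabs_pos_lt c_gt0.
have [N Nc] := csum (Rabs c / 4)%R ltac:(lra).
have := Nc N (le_n N); have := Nc N.+1 (le_S _ _ (le_n N)).
rewrite /R_dist !sum_cte !S_INR => h1 h2.
have := Rabs_triang (c * (INR N + 1 + 1) - c) (- (c * (INR N + 1) - c)).
rewrite Rabs_Ropp.
have -> : (c * (INR N + 1 + 1) - c + - (c * (INR N + 1) - c) = c)%R by ring.
lra.
Qed.

Lemma Pr_disjointU X Y : measurable P X -> measurable P Y ->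
  (forall w, X w -> Y w -> False) ->
  Pr P (fun w => X w \/ Y w) = (Pr P X + Pr P Y)%R.
Proof.
move=> mX mY XY; pose F n := match n with 0 => X | 1 => Y | _ => fun _ => False end.
have mF n : measurable P (F n) by case: n => [|[|n]] //=; apply: measurable0.
have dF m n : m <> n -> forall w, F m w -> F n w -> False.
  by case: m n => [|[|m]] [|[|n]] //= _ w Yw /XY.
have := Pr_sigma_additive mF dF.
rewrite (@eq_event (fun w => exists n, F n w) (fun w => X w \/ Y w)); last first.
  by move=> w; split=> [[[|[|n]] Fw]|[Xw|Yw]]; [left|right|case: Fw|exists 0|exists 1].
move/uniqueness_sum; apply; apply: (@infinite_sum_eventually _ 1).
case=> // n _; elim: n => [|n IHn] //; rewrite tech5 IHn /= Pr0; ring.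
Qed.

Lemma exists2_in_cons (I : eqType) (Q : I -> Prop) (i : I) (s : seq I) :
  (exists2 j, j \in i :: s & Q j) <-> Q i \/ exists2 j, j \in s & Q j.
Proof.
split=> [[j]|[Qi|[j js Qj]]].
- by rewrite inE => /predU1P[->|]; [left|right; exists j].
- by exists i; rewrite ?mem_head.
- by exists j; rewrite // inE js orbT.
Qed.

Lemma measurable_big_union (I : eqType) (F : I -> Omega -> Prop) (s : seq I) :
  (forall i, measurable P (F i)) -> measurable P (fun w => exists2 i, i \in s & F i w).
Proof.
move=> mF; elim: s => [|i s IHs].
  apply: (@measurable_ext _ (fun _ => False)); last exact: measurable0.
  by move=> w; split=> [[]|].
apply: (@measurable_ext _ (fun w => F i w \/ exists2 j, j \in s & F j w)).
  by move=> w; apply: exists2_in_cons.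
exact: measurableU.
Qed.

Local Open Scope ring_scope.

Lemma Pr_big_union (I : eqType) (F : I -> Omega -> Prop) (s : seq I) :
  uniq s -> (forall i, measurable P (F i)) ->
  (forall i j w, F i w -> F j w -> i = j) ->
  Pr P (fun w => exists2 i, i \in s & F i w) = \sum_(i <- s) Pr P (F i).
Proof.
move=> + mF Finj; elim: s => [|i s IHs] /=.
  by rewrite big_nil (@Pr_ext _ (fun _ => False)) ?Pr0 // => w; split=> [[]|].
case/andP=> i_notin_s uniq_s; rewrite big_cons -IHs // -RplusE -Pr_disjointU //.
- by apply: Pr_ext => w; apply: exists2_in_cons.
- exact: measurable_big_union.
by move=> w Fiw [j js /(Finj _ _ _ Fiw) ij]; rewrite ij js in i_notin_s.
Qed.

End FiniteAdditivity.

Section Atoms.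
Variables (T : finType) (Omega : Type) (P : prob_space Omega) (A : T -> Omega -> Prop).
Hypothesis mA : forall v, measurable P (A v).

Local Open Scope ring_scope.

Lemma double_count (R' : pzSemiRingType) (I J : finType) (D : {pred I})
    (r : I -> J -> bool) (F : J -> R') :
  \sum_(i in D) \sum_(j | r i j) F j = \sum_j #|[set i in D | r i j]|%:R * F j.
Proof.
under eq_bigr do rewrite big_mkcond.
rewrite exchange_big; apply: eq_bigr => j _; rewrite -big_mkcondr mulr_natl -sumr_const.
by apply: eq_bigl => i; rewrite inE.
Qed.

Definition pattern (w : Omega) : {set T} := [set v | `[< A v w >]].

Lemma in_pattern v w : v \in pattern w <-> A v w.
Proof. by rewrite inE; split=> /asboolP. Qed.

Definition atom (S : {set T}) (w : Omega) : Prop := pattern w = S.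

Lemma measurable_atom S : measurable P (atom S).
Proof.
apply: (@measurable_ext _ _ _
  (fun w => forall v, v \in enum T -> if v \in S then A v w else ~ A v w)).
  move=> w; rewrite /atom; split=> [<- v _ | SA]; first by rewrite inE; case: asboolP.
  apply/setP => v; have := SA v (mem_enum _ v); rewrite inE.
  by case: (v \in S); case: asboolP.
by apply: measurable_big_inter => v; case: (v \in S); last apply: measurable_compl.
Qed.

Lemma Pr_pattern (Q : pred {set T}) :
  Pr P (fun w => Q (pattern w)) = \sum_(S | Q S) Pr P (atom S).
Proof.
rewrite -big_filter -Pr_big_union ?filter_uniq ?index_enum_uniq //; first last.
- by move=> S S' w; rewrite /atom => <-.
- exact: measurable_atom.
apply: Pr_ext => w; split=> [QS | [S]].
  by exists (pattern w); rewrite // mem_filter QS mem_index_enum.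
by rewrite mem_filter /atom => /andP[QS _] ->.
Qed.

Lemma Pr_union_lower_bound (E : {set {set T}}) (c : nat) :
  (forall S : {set T}, (#|S| <= c + #|[set s in E | s \subset S]|)%nat) ->
  \sum_v Pr P (A v) - \sum_(s in E) Pr P (fun w => forall v, v \in s -> A v w)
    <= c%:R * Pr P (fun w => exists v, A v w).
Proof.
move=> cover; pose p S := Pr P (atom S).
have p_ge0 S : 0 <= p S by apply/RleP/Pr_nonneg/measurable_atom.
have PrA v : Pr P (A v) = \sum_(S : {set T} | v \in S) p S.
  by rewrite -Pr_pattern; apply: Pr_ext => w; rewrite in_pattern.
have PrE (s : {set T}) :
    Pr P (fun w => forall v, v \in s -> A v w) = \sum_(S : {set T} | s \subset S) p S.
  rewrite -Pr_pattern; apply: Pr_ext => w.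
  by split=> [sA | /subsetP sA v /sA/in_pattern //]; apply/subsetP => v /sA/in_pattern.
have PrU : Pr P (fun w => exists v, A v w) = \sum_(S | S != set0) p S.
  rewrite -Pr_pattern; apply: Pr_ext => w.
  split=> [[v /in_pattern Av] | /set0Pn[v /in_pattern]]; last by exists v.
  by apply/set0Pn; exists v.
rewrite PrU (eq_bigr _ (fun v _ => PrA v)) (eq_bigr _ (fun s _ => PrE s)).
rewrite (double_count predT) double_count -sumrB mulr_sumr [leRHS]big_mkcond /=.
apply: ler_sum => S _; rewrite cardsE -mulrBl.
case: ifPn => [_ | /negPn/eqP ->]; last by rewrite cards0 sub0r mulNr oppr_le0 mulr_ge0.
apply: ler_wpM2r => //; rewrite lerBlDr -natrD ler_nat.
exact: cover.
Qed.

End Atoms.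

Lemma alpha_gt0 (T : finType) (e : rel T) (x0 : T) : irreflexive e -> 0 < alpha e.
Proof.
move=> eirr; apply: (@leq_trans #|[set x0]|); first by rewrite cards1.
apply: (@leq_bigmax_cond _ (independent e)).
by apply/forallP => x; apply/implyP; rewrite inE => /eqP->; apply/forallP => y;
  apply/implyP; rewrite inE => /eqP->; rewrite eirr.
Qed.

Section ParentFunction.
Variables (T : finType) (e : rel T) (parent : T -> T) (rank : T -> nat).
Hypothesis esym : symmetric e.
Hypothesis edge_parent : forall u v, e u v -> u = parent v \/ v = parent u.
Hypothesis rank_parent : forall v, e (parent v) v -> rank (parent v) < rank v.

Definition children_in (S : {set T}) : {set T} :=
  [set v in S | e (parent v) v && (parent v \in S)].

Lemma independent_setD_children (S : {set T}) : independent e (S :\: children_in S).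
Proof.
apply/forall_inP => x /setDP[xS xC]; apply/forall_inP => y /setDP[yS yC].
apply/negP => /[dup] exy /edge_parent[xy|yx].
  by move: yC; rewrite !inE yS -xy xS exy.
by move: xC; rewrite !inE xS -yx yS esym exy.
Qed.

Lemma card_children_le (S : {set T}) :
  #|children_in S| <= #|[set s in edges e | s \subset S]|.
Proof.
pose edge_to_parent v := [set v; parent v].
have inj : {in children_in S &, injective edge_to_parent}.
  move=> u v /setIdP[_ /andP[eu _]] /setIdP[_ /andP[ev _]] uv.
  have: u \in edge_to_parent v by rewrite -uv !inE eqxx.
  have: v \in edge_to_parent u by rewrite uv !inE eqxx.
  rewrite !inE => /predU1P[-> //|/eqP vu] /predU1P[// |/eqP uv'].
  move: (rank_parent eu) (rank_parent ev); rewrite -vu -uv' => /ltn_trans/[apply].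
  by rewrite ltnn.
rewrite -(card_in_imset inj); apply/subset_leq_card/subsetP => s /imsetP[v].
case/setIdP=> vS /andP[ev pS] ->; rewrite !inE; apply/andP; split.
  by apply/imsetP; exists (parent v, v); rewrite ?inE // setUC.
by apply/subsetP => x; rewrite !inE => /orP[]/eqP->.
Qed.

Lemma card_le_alpha_add_edges (S : {set T}) :
  #|S| <= alpha e + #|[set s in edges e | s \subset S]|.
Proof.
rewrite -(cardsID (children_in S) S) addnC; apply: leq_add.
  by apply: leq_bigmax_cond; apply: independent_setD_children.
exact: leq_trans (subset_leq_card (subsetIr _ _)) (card_children_le S).
Qed.

End ParentFunction.

Section Depth.
Variables (T : finType) (e : rel T) (x0 : T).
Hypothesis econn : forall v, connect e x0 v.

Definition reachable_in (n : nat) (v : T) : bool :=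
  [exists p : n.-tuple T, path e x0 p && (last x0 p == v)].

Lemma reachable_in_exists v : exists n, reachable_in n v.
Proof.
have /connectP[p ep ->] := econn v.
by exists (size p); apply/existsP; exists (in_tuple p); rewrite /= ep eqxx.
Qed.

Definition depth (v : T) : nat := ex_minn (reachable_in_exists v).

Lemma depth_min n v : reachable_in n v -> depth v <= n.
Proof. by rewrite /depth; case: ex_minnP => m _; apply. Qed.

Lemma depth_eq0 v : (depth v == 0) = (v == x0).
Proof.
apply/idP/eqP => [|->]; last first.
  rewrite -leqn0; apply: depth_min.
  by apply/existsP; exists (in_tuple [::]); rewrite /= eqxx.
rewrite /depth; case: ex_minnP => m /existsP[p /andP[_ /eqP <-]] _ /eqP m0.
by subst m; rewrite tuple0.
Qed.

Lemma depth_root : depth x0 = 0.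
Proof. by apply/eqP; rewrite depth_eq0. Qed.

Lemma exists_lower_neighbour v : v != x0 -> exists2 u, e u v & depth u < depth v.
Proof.
move=> vx0; have /existsP[[s /= /eqP sz] /andP[/= es /eqP sv]] : reachable_in (depth v) v.
  by rewrite /depth; case: ex_minnP.
case/lastP: s sz es sv => [_ _ /= x0v|s u]; first by rewrite x0v eqxx in vx0.
rewrite size_rcons rcons_path last_rcons => sz /andP[es eu] uv; subst u.
exists (last x0 s) => //; rewrite -sz ltnS depth_min //.
by apply/existsP; exists (in_tuple s); rewrite es eqxx.
Qed.

Definition parent (v : T) : T := odflt v [pick u | e u v & depth u < depth v].

Lemma parentP v : v != x0 -> e (parent v) v /\ depth (parent v) < depth v.
Proof.
move=> /exists_lower_neighbour[u euv duv]; rewrite /parent.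
by case: pickP => [w /andP[]|/(_ u)] //=; rewrite euv duv.
Qed.

End Depth.

Section Tree.
Variables (T : finType) (e : rel T).
Hypotheses (esym : symmetric e) (eirr : irreflexive e) (eacyc : ~ has_cycle e).

Definition rem_vertex (v : T) : rel T := [rel a b | [&& e a b, a != v & b != v]].

Lemma rem_vertex_sym v : symmetric (rem_vertex v).
Proof. by move=> a b; rewrite /rem_vertex /= esym (andbC (a != v)). Qed.

Lemma rem_vertex_path_notin v a q : path (rem_vertex v) a q -> v \notin q.
Proof.
elim: q a => //= c q IHq a /andP[/and3P[_ _ cv] /IHq vq].
by rewrite inE negb_or eq_sym cv.
Qed.

(* Closing a path of [rem_vertex v] between two neighbours of [v] through [v]
   would give a cycle. *)
Lemma neighbours_disconnected v a b :
  e v a -> e v b -> a != b -> ~~ connect (rem_vertex v) a b.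
Proof.
move=> eva evb ab; apply/negP => /connectP[p pp bp]; rewrite {b}bp in evb ab.
case/shortenP: pp evb ab => q qp uq _ evb ab.
have qv : v \notin a :: q.
  rewrite inE negb_or (rem_vertex_path_notin qp) andbT.
  by apply: contraTneq eva => ->; rewrite eirr.
apply: eacyc; exists [:: v, a & q]; split=> /=.
- by case: q {qp uq evb qv} ab => //=; rewrite eqxx.
- by rewrite qv; exact: uq.
rewrite rcons_path eva (esym _ v) evb andbT.
by apply: sub_path qp => x y /and3P[].
Qed.

Variable x0 : T.
Hypothesis econn : forall v, connect e x0 v.
Local Notation depth := (depth econn).
Local Notation parent := (parent econn).

Lemma connect_rem_vertex_root u v :
  depth u <= depth v -> u != v -> connect (rem_vertex v) u x0.
Proof.
have [n] := ubnP (depth u); elim: n u => // n IHn u; rewrite ltnS => un uv u_neq_v.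
have [-> | ux0] := eqVneq u x0; first exact: connect0.
have [epu pu] := parentP econn ux0.
have pv : parent u != v by apply: contraTneq (leq_trans pu uv) => ->; rewrite ltnn.
apply: connect_trans (connect1 _) (IHn _ (leq_trans pu un) (ltnW (leq_trans pu uv)) pv).
by rewrite /rem_vertex /= esym epu u_neq_v.
Qed.

Lemma lower_neighbour_parent u v : e u v -> depth u <= depth v -> u = parent v.
Proof.
move=> euv uv; have u_neq_v : u != v by apply: contraTneq euv => ->; rewrite eirr.
have vx0 : v != x0.
  apply/eqP => vx0; move: uv; rewrite vx0 depth_root leqn0 depth_eq0 => /eqP ux0.
  by rewrite ux0 vx0 eirr in euv.
have [epv pv] := parentP econn vx0.
apply/eqP/negPn/negP => u_neq_p.
have [evu evp] : e v u /\ e v (parent v) by rewrite !(esym v).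
apply: (negP (neighbours_disconnected evu evp u_neq_p)).
apply: connect_trans (connect_rem_vertex_root uv u_neq_v) _.
rewrite (sym_connect_sym (rem_vertex_sym v)) connect_rem_vertex_root ?(ltnW pv) //.
by apply: contraTneq pv => ->; rewrite ltnn.
Qed.

Lemma edge_parent u v : e u v -> u = parent v \/ v = parent u.
Proof.
move=> euv; case: (leqP (depth u) (depth v)) => uv; [left | right].
  exact: lower_neighbour_parent.
by apply: lower_neighbour_parent; rewrite 1?esym // ltnW.
Qed.

Lemma depth_parent v : e (parent v) v -> depth (parent v) < depth v.
Proof.
have [-> | /(parentP econn)[] //] := eqVneq v x0.
by rewrite /parent; case: pickP => [u /andP[_]|_]; rewrite depth_root ?eirr.
Qed.

End Tree.

Theorem corollary1 (T : finType) (e : rel T) (x0 : T) (Omega : Type)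
  (P : prob_space Omega) (A : T -> Omega -> Prop) :
  is_tree e ->
  (forall v, measurable P (A v)) ->
  (Pr P (fun w => exists v, A v w) >=
     / INR (alpha e) *
     (\big[Rplus/0%R]_(v : T) Pr P (A v)
      - \big[Rplus/0%R]_(s in edges e) Pr P (fun w => forall v, v \in s -> A v w)))%R.
Proof.
move=> [[esym eirr] /(_ x0) econn eacyc] mA.
have cover := card_le_alpha_add_edges esym (edge_parent esym eirr eacyc econn)
  (depth_parent eirr (econn := econn)).
apply/Rle_ge/RleP; rewrite RmultE RminusE RinvE INRE ler_pdivrMl ?ltr0n.
  exact (Pr_union_lower_bound mA cover).
exact: alpha_gt0 x0 eirr.
Qed.
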